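(* Let $(\mathcal{P},\sim)$ be a noncommutative uniform family of posets, let $H(\mathcal{P})$ be its incidence Hopf algebra with antipode $S$, let $x_n$ ($n\ge1$) be the unique indecomposable type of rank $n$ and $x_0=1$, and let $W_{n,k}$ be the rank polynomials. For $n\ge1$ let $M_n$ be the $n\times n$ matrix whose $(i,j)$ entry is $W_{n-i+1,\,n-j}$ (so its subdiagonal entries are $W_{m,m}=1$ and entries below the subdiagonal are $0$). Then $$S(x_n)=-\,|M_n|_{1n},$$ where $|\cdot|_{1n}$ is the quasideterminant computed at the top right entry (equivalently, $S(x_n)=|-M_n|_{1n}$).
   Context: All posets are finite with a unique minimal element $0_P$ and a unique maximal element $1_P$; the interval $[x,y]$ is $\{z: x\le z\le y\}$. Let $\mathcal{P}$ be a family of such posets that is interval closed (every interval of a member is a member) and hereditary (closed under direct product $P\times Q$ with componentwise order). Let $\sim$ be an equivalence relation on $\mathcal{P}$ that is order-compatible (if $P\sim Q$ there is a bijection $\varphi:P\to Q$ with $[0_P,x]\sim[0_Q,\varphi(x)]$ and $[x,1_P]\sim[\varphi(x),1_Q]$ for all $x\in P$), compatible with direct products ($P\sim P'$, $Q\sim Q'$ imply $P\times Q\sim P'\times Q'$), and reduced ($P\times Q\sim Q\times P\sim P$ whenever $Q$ has one element); it is not assumed that $P\times Q\sim Q\times P$ in general. Write $\overline{P}$ for the class of $P$. The incidence Hopf algebra $H(\mathcal{P})$ is the $\mathbb{K}$-vector space with basis the classes, product $\overline{P}\,\overline{Q}=\overline{P\times Q}$, unit the class of a one-point poset, coproduct $\Delta(\overline{P})=\sum_{x\in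 P}\overline{[0_P,x]}\otimes\overline{[x,1_P]}$, and counit $\varepsilon(\overline{P})=1$ if $|P|=1$ and $0$ otherwise; it is a Hopf algebra. A class is indecomposable if it is not the class of a product $P\times Q$ with $P,Q$ both of cardinality $>1$. A poset is graded if all its maximal chains have the same number of cover steps, called its rank. A (noncommutative) uniform family is such $(\mathcal{P},\sim)$ consisting of graded posets with: (1) if $\overline{P}$ is indecomposable and $y\in P$, $y<1_P$, then $\overline{[y,1_P]}$ is indecomposable; (2) for every $n\ge1$ there is exactly one indecomposable class of rank $n$. Rank polynomials: $W_{0,0}=1$, and for $n\ge1$, choosing $[x,y]$ in the class $x_n$, $W_{n,k}=\sum_{z\in[x,y],\ \mathrm{rank}[z,y]=k}\overline{[x,z]}$; then $W_{n,n}=1$, $W_{n,0}=x_n$, $W_{n,k}=0$ for $n<k$, and $\Delta(x_n)=\sum_{k\ge0}W_{n,k}\otimes x_k$. Quasideterminant: for an $n\times n$ matrix $A=(a_{ij})$ over a noncommutative ring, with $A^{pq}$ the matrix with row $p$ and column $q$ deleted (original indices kept), $|A|_{11}=a_{11}$ if $n=1$ and $|A|_{pq}=a_{pq}-\sum_{i\ne p,j\ne q}a_{pj}(|A^{pq}|_{ij})^{-1}a_{iq}$; for $A$ with $a_{i+1,i}=-1$ and $a_{ij}=0$ for $i>j+1$ this equals $a_{1n}+\sum_{k\ge1}\sum_{1\le j_1<\cdots<j_k<n}a_{1j_1}a_{j_1+1,j_2}\cdots a_{j_k+1,n}$. *)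

From HB Require Import structures.
From mathcomp Require Import all_boot all_order all_algebra.
Set Implicit Arguments. Unset Strict Implicit. Unset Printing Implicit Defensive.
Import GRing.Theory.
Local Open Scope ring_scope.

Record FinPoset : Type := FinPosetPack {
  pcar :> finType;
  ple : rel pcar;
  ple_refl : reflexive ple;
  ple_anti : antisymmetric ple;
  ple_trans : transitive ple;
  pbot : pcar;
  ptop : pcar;
  pbot_min : forall z, ple pbot z;
  ptop_max : forall z, ple z ptop }.

Section Interval.
Variables (P : FinPoset) (x y : P) (hxy : @ple P x y).
Definition int_car : finType := {z : P | @ple P x z && @ple P z y}.
Definition int_le : rel int_car := fun a b => @ple P (val a) (val b).
Lemma int_le_refl : reflexive int_le.
Proof. by move=> a; exact: ple_refl. Qed.
Lemma int_le_anti : antisymmetric int_le.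
Proof. by move=> a b h; apply: val_inj; exact: ple_anti. Qed.
Lemma int_le_trans : transitive int_le.
Proof. by move=> a b c; exact: ple_trans. Qed.
Lemma int_bot_mem : @ple P x x && @ple P x y.
Proof. by rewrite ple_refl hxy. Qed.
Lemma int_top_mem : @ple P x y && @ple P y y.
Proof. by rewrite ple_refl hxy. Qed.
Definition int_bot : int_car := exist _ x int_bot_mem.
Definition int_top : int_car := exist _ y int_top_mem.
Lemma int_bot_min z : int_le int_bot z.
Proof. by case: z => z hz; case/andP: (hz). Qed.
Lemma int_top_max z : int_le z int_top.
Proof. by case: z => z hz; case/andP: (hz). Qed.
Definition interval : FinPoset :=
  FinPosetPack int_le_refl int_le_anti int_le_trans int_bot_min int_top_max.
End Interval.

Definition lower (P : FinPoset) (x : P) : FinPoset := interval (pbot_min x).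
Definition upper (P : FinPoset) (x : P) : FinPoset := interval (ptop_max x).

Section Product.
Variables P Q : FinPoset.
Definition prod_car : finType := (pcar P * pcar Q)%type.
Definition prod_le : rel prod_car :=
  fun a b => @ple P a.1 b.1 && @ple Q a.2 b.2.
Lemma prod_le_refl : reflexive prod_le.
Proof. by move=> a; rewrite /prod_le !ple_refl. Qed.
Lemma prod_le_anti : antisymmetric prod_le.
Proof.
move=> [a1 a2] [b1 b2] /andP[/andP[h1 h2] /andP[h3 h4]].
have e1 : a1 = b1 by apply: ple_anti; rewrite h1 h3.
have e2 : a2 = b2 by apply: ple_anti; rewrite h2 h4.
by rewrite e1 e2.
Qed.
Lemma prod_le_trans : transitive prod_le.
Proof.
move=> b a c /andP[h1 h2] /andP[h3 h4].
by rewrite /prod_le (ple_trans h1 h3) (ple_trans h2 h4).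
Qed.
Lemma prod_bot_min z : prod_le (pbot P, pbot Q) z.
Proof. by rewrite /prod_le !pbot_min. Qed.
Lemma prod_top_max z : prod_le z (ptop P, ptop Q).
Proof. by rewrite /prod_le !ptop_max. Qed.
Definition prodP : FinPoset :=
  FinPosetPack prod_le_refl prod_le_anti prod_le_trans prod_bot_min prod_top_max.
End Product.

Definition pcover (P : FinPoset) : rel P := fun x y =>
  [&& x != y, @ple P x y &
      [forall z : P, ~~ [&& z != x, z != y, @ple P x z & @ple P z y]]].

(* There is a maximal chain 0_P = z_0 < z_1 < ... < z_k = 1_P with k cover
   steps (in a finite bounded poset maximal chains are exactly such
   saturated chains from 0_P to 1_P). *)
Definition has_max_chain (P : FinPoset) (k : nat) : bool :=
  [exists s : k.-tuple P, path (@pcover P) (pbot P) s && (last (pbot P) s == ptop P)].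

Definition graded (P : FinPoset) : Prop :=
  forall k1 k2, has_max_chain P k1 -> has_max_chain P k2 -> k1 = k2.

Definition has_rank (P : FinPoset) (k : nat) : Prop := graded P /\ has_max_chain P k.

Section Family.
Variables (Fam : FinPoset -> Prop) (eqv : FinPoset -> FinPoset -> Prop).

Definition interval_closed : Prop :=
  forall P : FinPoset, Fam P -> forall (x y : P) (h : @ple P x y), Fam (interval h).

Definition hereditary : Prop :=
  forall P Q, Fam P -> Fam Q -> Fam (prodP P Q).

Definition equivalence_on : Prop :=
  [/\ forall P, Fam P -> eqv P P,
      forall P Q, Fam P -> Fam Q -> eqv P Q -> eqv Q P &
      forall P Q R, Fam P -> Fam Q -> Fam R -> eqv P Q -> eqv Q R -> eqv P R].

Definition order_compatible : Prop :=
  forall P Q, Fam P -> Fam Q -> eqv P Q ->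
    exists phi : P -> Q, bijective phi /\
      forall x : P, eqv (lower x) (lower (phi x)) /\ eqv (upper x) (upper (phi x)).

Definition product_compatible : Prop :=
  forall P P' Q Q', Fam P -> Fam P' -> Fam Q -> Fam Q' ->
    eqv P P' -> eqv Q Q' -> eqv (prodP P Q) (prodP P' Q').

Definition reduced : Prop :=
  forall P Q, Fam P -> Fam Q -> #|pcar Q| = 1%N ->
    eqv (prodP P Q) P /\ eqv (prodP Q P) P.

Definition indecomposable (P : FinPoset) : Prop :=
  ~ exists Q R, [/\ Fam Q, Fam R, (1 < #|pcar Q|)%N, (1 < #|pcar R|)%N &
                    eqv P (prodP Q R)].

Definition uniform_family : Prop :=
  [/\ interval_closed, hereditary, equivalence_on, order_compatible &
      [/\ product_compatible, reduced,
      (forall P, Fam P -> graded P),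
      (forall P, Fam P -> indecomposable P ->
         forall y : P, y != ptop P -> indecomposable (upper y)) &
      (forall n, (0 < n)%N ->
         (exists P, [/\ Fam P, indecomposable P & has_rank P n]) /\
         (forall P Q, Fam P -> Fam Q -> indecomposable P -> indecomposable Q ->
            has_rank P n -> has_rank Q n -> eqv P Q))]].

Variables (K : fieldType) (H : algType K) (cls : FinPoset -> H).

(* H is the K-algebra with basis the classes, product = class of the
   direct product, unit = class of a one-point poset. *)
Definition is_incidence_algebra : Prop :=
  [/\ (forall P Q, Fam P -> Fam Q -> (cls P = cls Q <-> eqv P Q)),
      (forall m (p : 'I_m -> FinPoset) (c : 'I_m -> K),
          (forall i, Fam (p i)) ->
          (forall i j, i != j -> ~ eqv (p i) (p j)) ->
          \sum_(i < m) c i *: cls (p i) = 0 -> forall i, c i = 0),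
      (forall h : H, exists m (p : 'I_m -> FinPoset) (c : 'I_m -> K),
          (forall i, Fam (p i)) /\ h = \sum_(i < m) c i *: cls (p i)),
      (forall P Q, Fam P -> Fam Q -> cls (prodP P Q) = cls P * cls Q) &
      (forall P, Fam P -> #|pcar P| = 1%N -> cls P = 1)].

Definition counit (P : FinPoset) : H := if #|pcar P| == 1%N then 1 else 0.

(* S is the antipode: the linear map with
   m (S (x) id) Delta = eta eps = m (id (x) S) Delta, where
   Delta(P) = sum_x [0_P,x] (x) [x,1_P]. *)
Definition is_antipode (S : {linear H -> H}) : Prop :=
  forall P, Fam P ->
    \sum_(x : pcar P) S (cls (lower x)) * cls (upper x) = counit P /\
    \sum_(x : pcar P) cls (lower x) * S (cls (upper x)) = counit P.
End Family.

(* Rank polynomial W_{m,k}, computed in the representative X m of x_m: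
   sum over z with rank [z,1] = k of the class of [0,z]. *)
Definition rankW (K : fieldType) (H : algType K) (cls : FinPoset -> H)
  (X : nat -> FinPoset) (m k : nat) : H :=
  \sum_(z : pcar (X m) | has_max_chain (upper z) k) cls (lower z).

(* Quasideterminant |A|_{1n} of an n x n matrix A with a_{i+1,i} = -1 *)
(* and a_{ij} = 0 for i > j+1, via the formula                         *)
(*  a_{1n} + sum_{k>=1} sum_{1<=j1<...<jk<n} a_{1j1} a_{j1+1,j2}...a_{jk+1,n} *)
(* (entries 1-indexed).                                                *)
Definition mxe (R : pzRingType) (n : nat) (A : 'M[R]_n) (i j : nat) : R :=
  match (insub i.-1 : option 'I_n), (insub j.-1 : option 'I_n) with
  | Some i', Some j' => A i' j'
  | _, _ => 0
  end.

(* breakpoints 0 = j0 < j1 < ... < jk < j_{k+1} = n *)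
Definition hess_breaks (n : nat) (J : {set 'I_n}) : seq nat :=
  0%N :: rcons (sort leq [seq val j | j in J]) n.

Definition qdet_hess_1n (R : pzRingType) (n : nat) (A : 'M[R]_n) : R :=
  \sum_(J : {set 'I_n} | [forall j in J, 0 < val j]%N)
     \prod_(pq <- zip (hess_breaks J) (behead (hess_breaks J)))
        mxe A pq.1.+1 pq.2.

From Pilot Require Import Defs.
From mathcomp Require Import all_boot all_order all_algebra.
From mathcomp Require Import zify.
Import GRing.Theory.
Local Open Scope ring_scope.
Set Implicit Arguments. Unset Strict Implicit. Unset Printing Implicit Defensive.

(* Grouping the terms of the antipode identity
   sum_x [0,x] S([x,1]) = eps(x_p) by the rank k of [x,1], each upper interval
   being the indecomposable class x_k, gives the triangular recursion
   S(x_p) = - sum_(k<p) W_(p,k) S(x_k).  Expanding the Hessenberg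
   quasideterminant |-M_n|_(1n) along its first breakpoint j_1 shows that its
   trailing parts |-M_n|_(j_1+1,n) satisfy the same recursion, so they are the
   S(x_(n-j_1)). *)
Section SaturatedChains.
Variable P : FinPoset.
Local Notation le := (@ple P).

Definition sat_chain (a b : P) (k : nat) : Prop :=
  exists s : seq P, [/\ size s = k, path (@pcover P) a s & last a s = b].

Lemma pcover_le u v : pcover u v -> le u v.
Proof. by case/and3P. Qed.

Lemma path_cover_le a s : path (@pcover P) a s -> le a (last a s).
Proof.
move=> /(sub_path pcover_le) /(order_path_min (@ple_trans P)) /allP hs.
by have := mem_last a s; rewrite inE => /predU1P [->|/hs]; rewrite ?ple_refl.
Qed.

Lemma sat_chain_cat a b c k1 k2 :
  sat_chain a b k1 -> sat_chain b c k2 -> sat_chain a c (k1 + k2).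
Proof.
case=> s1 [<- p1 l1] [s2 [<- p2 l2]]; exists (s1 ++ s2).
by rewrite size_cat cat_path last_cat p1 l1 p2.
Qed.

Lemma sat_chain0 a b : sat_chain a b 0 -> a = b.
Proof. by case=> s [/size0nil -> _ /= ->]. Qed.

Lemma sat_chainS_neq a b k : sat_chain a b k.+1 -> a != b.
Proof.
case=> [[|w s] [//= _ /andP [/and3P [haw hle _] hp] hl]].
apply: contraNneq haw => eab; apply/eqP/ple_anti.
by rewrite hle eab -hl path_cover_le.
Qed.

Definition itv (a b : P) : {set P} := [set z | le a z && le z b].

Lemma sat_chain_exists a b : le a b -> exists k, sat_chain a b k.
Proof.
have [N] := ubnP #|itv a b|; elim: N a b => // N IH a b hN hab.
have smaller (a' b' w : P) : itv a' b' \subset itv a b -> w \in itv a b ->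
    w \notin itv a' b' -> (#|itv a' b'| < N)%N.
  move=> hsub hw hw'; apply: (leq_trans _ (ltnSE hN)); apply: proper_card.
  by apply/properP; split=> //; exists w.
case: (boolP [exists z, [&& z != a, z != b, le a z & le z b]]) => [|hnone].
  case/existsP=> z /and4P [hza hzb haz hzb'].
  have [k1 h1] : exists k, sat_chain a z k.
    apply: IH haz; apply: (smaller _ _ b).
    - by apply/subsetP=> w; rewrite !inE => /andP [-> /ple_trans ->].
    - by rewrite inE hab ple_refl.
    - rewrite inE hab /=; apply: contra hzb => hbz.
      by apply/eqP/ple_anti; rewrite hzb'.
  have [k2 h2] : exists k, sat_chain z b k.
    apply: IH hzb'; apply: (smaller _ _ a).
    - by apply/subsetP=> w; rewrite !inE => /andP [/(ple_trans haz) -> ->].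
    - by rewrite inE hab ple_refl.
    - rewrite inE hab andbT; apply: contra hza => hza'.
      by apply/eqP/ple_anti; rewrite hza'.
  by exists (k1 + k2)%N; apply: sat_chain_cat h1 h2.
have [<-|hab'] := eqVneq a b; first by exists 0%N, [::].
exists 1%N, [:: b]; split=> //=; rewrite andbT /pcover hab' hab /=.
by rewrite -negb_exists.
Qed.

Lemma has_max_chainP k : has_max_chain P k <-> sat_chain (pbot P) (ptop P) k.
Proof.
split; first by case/existsP=> t /andP [hp /eqP hl]; exists t; rewrite size_tuple.
case=> s [hs hp hl]; apply/existsP.
have hs' : size s == k by apply/eqP.
by exists (Tuple hs'); rewrite /= hp hl eqxx.
Qed.

End SaturatedChains.

Section IntervalChains.
Variables (P : FinPoset) (x y : P) (hxy : ple x y).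
Local Notation I := (Defs.interval hxy).

Lemma pcover_interval (u v : I) : pcover u v = pcover (val u) (val v).
Proof.
rewrite /pcover /= -val_eqE; congr [&& _, _ & _].
apply/forallP/forallP => hI z; apply/negP => /and4P [h1 h2 h3 h4].
  have hz : ple x z && ple z y.
    case/andP: (valP u) => hu _; case/andP: (valP v) => _ hv.
    by rewrite (ple_trans hu h3) (ple_trans h4 hv).
  by have := hI (exist _ z hz); rewrite /int_le /= -!val_eqE /= h1 h2 h3 h4.
by have /negP := hI (val z); apply; apply/and4P; split; rewrite ?val_eqE.
Qed.

Lemma path_interval (u : I) s :
  path (@pcover _) u s = path (@pcover P) (val u) (map val s).
Proof. by elim: s u => [|v s IH] u //=; rewrite pcover_interval IH. Qed.

Lemma path_interval_lift (u : I) s :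
  path (@pcover P) (val u) s -> last (val u) s = y ->
  exists s' : seq I, map val s' = s.
Proof.
elim: s u => [|w s IH] u /=; first by exists [::].
case/andP=> huw hp hl.
have hw : ple x w && ple w y.
  case/andP: (valP u) => hu _.
  by rewrite (ple_trans hu (pcover_le huw)) -hl path_cover_le.
have [s' <-] := IH (exist _ w hw) hp hl.
by exists (exist _ w hw :: s').
Qed.

Lemma has_max_chain_interval k : has_max_chain I k <-> sat_chain x y k.
Proof.
rewrite has_max_chainP; split.
  case=> s [hs hp hl]; exists (map val s); split.
  - by rewrite size_map.
  - by move: hp; rewrite path_interval.
  - by rewrite (last_map val s (int_bot hxy)) hl.
case=> s [hs hp hl].
have [s' hs'] := path_interval_lift (u := int_bot hxy) hp hl.
exists s'; split.
- by rewrite -hs -hs' size_map.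
- by rewrite path_interval hs'.
- by apply: val_inj; rewrite /= -(last_map val s' (int_bot hxy)) hs' hl.
Qed.

Lemma card_interval_trivial :
  (forall w, ple x w -> ple w y -> w = x) -> #|pcar I| = 1%N.
Proof.
move=> hI; apply/eqP; rewrite eqn_leq; apply/andP; split.
  apply/fintype_le1P => u v; apply: val_inj => /=.
  by case/andP: (valP u) => /hI h /h ->; case/andP: (valP v) => /hI h' /h' ->.
by apply/card_gt0P; exists (int_bot hxy).
Qed.

End IntervalChains.

Section HessenbergSum.
Variables (R : pzRingType) (n : nat) (e : nat -> nat -> R).

Definition sorted_vals (J : {set 'I_n}) : seq nat := sort leq [seq val j | j in J].

Definition hess_term (a : nat) (s : seq nat) : R :=
  \prod_(pq <- zip (a :: rcons s n) (rcons s n)) e pq.1.+1 pq.2.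

(* Sum over the breakpoints [a < j1 < ... < jk < n]; [qdet_hess_1n] is the case [a = 0]. *)
Definition hess_sum (a : nat) : R :=
  \sum_(J : {set 'I_n} | [forall j in J, a < val j]%N) hess_term a (sorted_vals J).

Lemma hess_term_nil a : hess_term a [::] = e a.+1 n.
Proof. by rewrite /hess_term /= big_seq1. Qed.

Lemma hess_term_cons a m s : hess_term a (m :: s) = e a.+1 m * hess_term m s.
Proof. by rewrite /hess_term /= big_cons. Qed.

Lemma sorted_vals0 : sorted_vals set0 = [::].
Proof. by rewrite /sorted_vals /image_mem enum_set0. Qed.

Lemma sorted_valsU1 (m : 'I_n) (J : {set 'I_n}) :
  (forall j, j \in J -> m < j)%N -> sorted_vals (m |: J) = val m :: sorted_vals J.
Proof.
move=> hmJ; have mNJ : m \notin J by apply/negP => /hmJ; rewrite ltnn.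
apply: (sorted_eq leq_trans anti_leq (sort_sorted leq_total _)).
  rewrite /= path_sortedE; last exact: leq_trans.
  rewrite all_sort sort_sorted ?andbT; last exact: leq_total.
  by apply/allP => x /mapP [j]; rewrite mem_enum => /hmJ /ltnW hj ->.
rewrite /sorted_vals perm_sort.
apply: (@perm_trans _ (val m :: [seq val j | j in J])); last first.
  by rewrite perm_cons perm_sym perm_sort.
apply: (@perm_map _ _ val (enum (m |: J)) (m :: enum J)); apply: uniq_perm.
- exact: enum_uniq.
- by rewrite /= mem_enum mNJ enum_uniq.
- by move=> x; rewrite mem_enum !inE mem_enum.
Qed.

Section SetMin.
Variable i0 : 'I_n.

Definition set_min (J : {set 'I_n}) : 'I_n :=
  [arg min_(i < odflt i0 [pick i in J] in J) val i].

Lemma set_minP J :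
  J != set0 -> set_min J \in J /\ forall j, j \in J -> (set_min J <= j)%N.
Proof.
move=> /set0Pn [j hj]; rewrite /set_min; case: pickP => [i hi|/(_ j)] /=.
  by case: (arg_minnP (fun i : 'I_n => val i) hi) => k hk hm; split.
by rewrite hj.
Qed.

Lemma set_min_setU1 (m : 'I_n) (J : {set 'I_n}) :
  (forall j, j \in J -> m < j)%N -> set_min (m |: J) = m.
Proof.
move=> hmJ; have [|hmem hle] := set_minP (J := m |: J).
  by apply/set0Pn; exists m; rewrite setU11.
apply/val_inj/eqP; rewrite eqn_leq hle ?setU11 //=.
by move: hmem; rewrite !inE => /predU1P [-> //|/hmJ /ltnW].
Qed.

(* First-step decomposition: split off the smallest breakpoint. *)
Lemma hess_sum_rec a :
  hess_sum a = e a.+1 n + \sum_(m : 'I_n | (a < m)%N) e a.+1 m * hess_sum m.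
Proof.
have hP0 : [forall j in (set0 : {set 'I_n}), a < val j]%N.
  by apply/forallP => j; rewrite inE.
rewrite /hess_sum (bigD1 set0) //= sorted_vals0 hess_term_nil; congr (_ + _).
symmetry; under eq_bigr => m _ do rewrite mulr_sumr.
rewrite pair_big_dep.
rewrite [RHS](reindex_onto (fun p : 'I_n * {set 'I_n} => p.1 |: p.2)
   (fun J => (set_min J, J :\ set_min J))); last first.
  by move=> J /andP [_ /set_minP [hJ _]]; rewrite setD1K.
apply: eq_big => [[m J]|[m J] /andP [_ hJ]] /=; last first.
  rewrite sorted_valsU1 ?hess_term_cons // => j hj.
  by move/forallP/(_ j): hJ; rewrite /= hj.
apply/andP/andP => [[ham hJ]|[/andP [ha hne] /eqP [hmin hD]]].
  have hmJ j : j \in J -> (m < j)%N by move=> hj; move/forallP/(_ j): hJ; rewrite hj.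
  have hne : m |: J != set0 by apply/set0Pn; exists m; rewrite setU11.
  rewrite hne set_min_setU1 // setU1K ?eqxx; last by apply/negP => /hmJ; rewrite ltnn.
  split=> //; apply/andP; split=> //; apply/forallP => j; apply/implyP; rewrite !inE.
  by case/predU1P => [-> //|/hmJ]; apply: ltn_trans.
have [hmem hle] := set_minP hne; rewrite hmin in hmem hle.
split; first by move/forallP/(_ m): ha; rewrite setU11.
apply/forallP => j; apply/implyP; rewrite -hD hmin !inE => /andP [hjm hj].
by rewrite ltn_neqAle eq_sym val_eqE hjm hle // !inE.
Qed.

End SetMin.

Lemma sum_ord_gt_rev (G : nat -> R) a : (a < n)%N ->
  \sum_(m < n | (a < m)%N) G (n - m)%N = \sum_(k < n - a.+1) G k.+1.
Proof.
move=> han; rewrite -(big_mkord (fun m => a < m)%N (fun m => G (n - m)%N)).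
rewrite -(big_mkord (fun _ => true) (fun k => G k.+1)) [RHS](big_nat_widen _ _ n); last lia.
rewrite big_nat_rev /= add0n; apply: congr_big_nat => // i /andP [_ hi].
  by apply/idP/idP; lia.
by congr G; lia.
Qed.

Lemma hess_sum_triangular (t : nat -> R) (c : nat -> nat -> R) :
    t 0%N = 1 ->
    (forall p, (0 < p <= n)%N -> t p = \sum_(k < p) c p k * t k) ->
    (forall a m, (a < n)%N -> (0 < m <= n)%N -> e a.+1 m = c (n - a)%N (n - m)%N) ->
  forall a, (a < n)%N -> hess_sum a = t (n - a)%N.
Proof.
move=> t0 ht he a; have [N] := ubnP (n - a)%N; elim: N a => // N IH a hN han.
rewrite (hess_sum_rec (Ordinal han)) he ?subnn //; last lia.
under eq_bigr => m ham.
  have hm := ltn_ord m.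
  rewrite IH ?he; try lia.
  over.
rewrite (sum_ord_gt_rev (fun k => c (n - a)%N k * t k)) // ht; last lia.
have -> : (n - a = (n - a.+1).+1)%N by lia.
by rewrite big_ord_recl t0 mulr1.
Qed.

End HessenbergSum.

Lemma qdet_hess_1nE (R : pzRingType) n (A : 'M[R]_n) :
  qdet_hess_1n A = hess_sum n (mxe A) 0.
Proof. by []. Qed.

Section Antipode.
Variables (Fam : FinPoset -> Prop) (eqv : FinPoset -> FinPoset -> Prop)
  (K : fieldType) (H : algType K) (cls : FinPoset -> H) (S : {linear H -> H})
  (X : nat -> FinPoset).
Hypotheses (hU : uniform_family Fam eqv) (hH : is_incidence_algebra Fam eqv cls)
  (hS : is_antipode Fam cls S)
  (hX : forall m, (0 < m)%N ->
          [/\ Fam (X m), indecomposable Fam eqv (X m) & has_rank (X m) m]).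

Lemma fam_interval (P : FinPoset) (x y : P) (h : ple x y) : Fam P -> Fam (Defs.interval h).
Proof. by case: hU => hI _ _ _ _ hP; apply: hI. Qed.

Lemma fam_graded P : Fam P -> graded P.
Proof. by case: hU => _ _ _ _ [_ _ hg _ _]; apply: hg. Qed.

Lemma indecomposable_upper (P : FinPoset) (y : P) :
  Fam P -> indecomposable Fam eqv P -> y != ptop P -> indecomposable Fam eqv (upper y).
Proof. by case: hU => _ _ _ _ [_ _ _ hI _] hP hPi; apply: hI. Qed.

Lemma cls_indecomposable_rank P Q k : (0 < k)%N -> Fam P -> Fam Q ->
  indecomposable Fam eqv P -> indecomposable Fam eqv Q ->
  has_rank P k -> has_rank Q k -> cls P = cls Q.
Proof.
case: hU hH => _ _ _ _ [_ _ _ _ huniq] [hcls _ _ _ _] hk hP hQ *.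
by apply/(hcls _ _ hP hQ); apply: (huniq k hk).2.
Qed.

Lemma cls_interval_trivial (P : FinPoset) (x y : P) (h : ple x y) : Fam P ->
  (forall w, ple x w -> ple w y -> w = x) -> cls (Defs.interval h) = 1.
Proof.
case: hH => _ _ _ _ hcls1 hP hI.
by apply: hcls1; [apply: fam_interval | apply: card_interval_trivial].
Qed.

Lemma cls_interval_refl (P : FinPoset) (x : P) (h : ple x x) :
  Fam P -> cls (Defs.interval h) = 1.
Proof.
by move=> hP; apply: cls_interval_trivial => // w hxw hwx; apply/ple_anti; rewrite hxw hwx.
Qed.

Lemma antipode1 : S 1 = 1.
Proof.
have [hX1 _ _] := hX (ltn0Sn 0).
pose P0 := lower (pbot (X 1)).
have hP0 : Fam P0 by apply: fam_interval.
have hc0 : #|pcar P0| = 1%N.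
  by apply: card_interval_trivial => w _ hw; apply/ple_anti; rewrite hw pbot_min.
have P0_all_eq (u v : P0) : u = v by have /fintype_le1P := eq_leq hc0; apply.
have [+ _] := hS hP0; rewrite /counit hc0 /= (big_pred1 (pbot P0)) => [|u]; last first.
  by rewrite /= (P0_all_eq u (pbot P0)) eqxx.
by rewrite !(cls_interval_trivial _ hP0) ?mulr1 // => w _ _; apply: P0_all_eq.
Qed.

(* The representative [X 0] is junk: the paper's [x_0] is [1]. *)
Definition antipode_x (k : nat) : H := if k is k'.+1 then S (cls (X k'.+1)) else 1.

Section Ranked.
Variables (p : nat) (hp : (0 < p)%N).
Local Notation P := (X p).

Lemma fam_X : Fam P. Proof. by case: (hX hp). Qed.

Lemma rank_complement (z : P) k :
  sat_chain z (ptop P) k -> exists2 r, (r + k = p)%N & sat_chain (pbot P) z r.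
Proof.
move=> hk; have [_ _ [hgr hmc]] := hX hp.
have [r hr] := sat_chain_exists (pbot_min z); exists r => //.
by apply: (hgr _ _ _ hmc); apply/has_max_chainP; apply: sat_chain_cat hr hk.
Qed.

Lemma upper_rank_exists (x : P) : exists2 k, (k <= p)%N & has_max_chain (upper x) k.
Proof.
have [k hk] := sat_chain_exists (ptop_max x).
have [r hr _] := rank_complement hk.
by exists k; [rewrite -hr leq_addl | apply/has_max_chain_interval].
Qed.

Lemma upper_rank_unique (x : P) k1 k2 :
  has_max_chain (upper x) k1 -> has_max_chain (upper x) k2 -> k1 = k2.
Proof. by apply: fam_graded; apply: fam_interval; apply: fam_X. Qed.

Lemma antipode_upper (x : P) k :
  has_max_chain (upper x) k -> S (cls (upper x)) = antipode_x k.
Proof.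
case: k => [|k] /has_max_chain_interval hk /=.
  have ex := sat_chain0 hk; subst x.
  by rewrite cls_interval_refl ?antipode1 //; apply: fam_X.
have [hXk hXki hXkr] := hX (ltn0Sn k).
suff -> : cls (upper x) = cls (X k.+1) by [].
apply: cls_indecomposable_rank hXki _ hXkr => //.
- by apply: fam_interval; apply: fam_X.
- by apply: indecomposable_upper (sat_chainS_neq hk); [apply: fam_X | case: (hX hp)].
- split; first by apply: fam_graded; apply: fam_interval; apply: fam_X.
  exact/has_max_chain_interval.
Qed.

Lemma rankW_diag : rankW cls X p p = 1.
Proof.
rewrite /rankW (big_pred1 (pbot P)) => [|z /=].
  by apply: cls_interval_refl; apply: fam_X.
apply/idP/eqP => [/has_max_chain_interval hz|->]; last first.
  by apply/has_max_chain_interval/has_max_chainP; case: (hX hp) => _ _ [_].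
have [r hr] := rank_complement hz.
have -> : r = 0%N by lia.
by move/sat_chain0 ->.
Qed.

Lemma counit_X : counit H P = 0.
Proof.
rewrite /counit; case: eqP => // /eq_leq /fintype_le1P hP1.
have : sat_chain (pbot P) (ptop P) p.-1.+1.
  by rewrite prednK //; apply/has_max_chainP; case: (hX hp) => _ _ [].
by move/sat_chainS_neq; rewrite (hP1 (ptop P) (pbot P)) eqxx.
Qed.

(* [m (id (x) S) Delta (x_p) = eps (x_p)] with [Delta (x_p) = sum_k W_(p,k) (x) x_k]. *)
Lemma antipode_rank_expansion :
  \sum_(k < p.+1) rankW cls X p k * antipode_x k = 0.
Proof.
transitivity (\sum_(x : P) \sum_(k < p.+1 | has_max_chain (upper x) k)
                cls (lower x) * antipode_x k).
  rewrite [RHS](exchange_big_dep xpredT) //=.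
  by apply: eq_big => // k _; rewrite /rankW mulr_suml.
rewrite -[RHS](counit_X) -(proj2 (hS fam_X)); apply: eq_bigr => x _.
have [k hkp hk] := upper_rank_exists x.
rewrite (big_pred1 (Ordinal (hkp : (k < p.+1)%N))) /= ?(antipode_upper hk) // => j.
by apply/idP/eqP => [hj|->//]; apply/val_inj/(upper_rank_unique hj).
Qed.

Lemma antipode_rec : antipode_x p = - \sum_(k < p) rankW cls X p k * antipode_x k.
Proof.
have := antipode_rank_expansion.
by rewrite big_ord_recr /= rankW_diag mul1r addrC => /eqP; rewrite addr_eq0 => /eqP.
Qed.

End Ranked.
End Antipode.

Lemma mxe_ord (R : pzRingType) n (A : 'M[R]_n) (i j : 'I_n) : mxe A i.+1 j.+1 = A i j.
Proof. by rewrite /mxe /= !valK. Qed.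

Theorem mainTheorem2
  (Fam : FinPoset -> Prop) (eqv : FinPoset -> FinPoset -> Prop)
  (hU : uniform_family Fam eqv)
  (K : fieldType) (H : algType K) (cls : FinPoset -> H)
  (hH : is_incidence_algebra Fam eqv cls)
  (S : {linear H -> H}) (hS : is_antipode Fam cls S)
  (X : nat -> FinPoset)
  (hX : forall m, (0 < m)%N ->
          [/\ Fam (X m), indecomposable Fam eqv (X m) & has_rank (X m) m])
  (n : nat) (hn : (0 < n)%N) :
  let M : 'M[H]_n := \matrix_(i < n, j < n) rankW cls X (n - i) (n - j.+1) in
  S (cls (X n)) = qdet_hess_1n (- M).
Proof.
move=> M; rewrite qdet_hess_1nE.
rewrite (hess_sum_triangular (t := antipode_x cls S X)
                             (c := fun p k => - rankW cls X p k)) //.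
- by rewrite subn0; case: n hn {M}.
- move=> p /andP [hp _]; rewrite (antipode_rec hU hH hS hX hp) -sumrN.
  by apply: eq_bigr => k _; rewrite mulNr.
- move=> a [//|m] ha /andP [_ hm].
  by rewrite (mxe_ord (-M) (Ordinal ha) (Ordinal hm)) !mxE.
Qed.
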